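(* Let $(G,T)$ be a terminal graph obtained from the terminal graph $(G-v,T\setminus\{v\})$ by introducing $v$, and let $k$ be a positive integer. Let $(H,\ell)=\mathcal{C}^c_k(G-v,T\setminus\{v\})$. Construct a labeled graph $(H',\ell')$ as follows. For every node $x$ of $H$ and every color $c\in\{1,\dots,k\}$: if the unique function $\delta:T\to\{1,\dots,k\}$ with $\delta(v)=c$ and $\delta|_{T\setminus\{v\}}=\ell(x)$ is a coloring of $G[T]$, introduce a node $x_c$ with $\ell'(x_c)=\delta$. For every pair of distinct nodes $x_c,y_d$, add an edge between them if and only if $x=y$, or $xy$ is an edge of $H$ and $c=d$. Then $(H',\ell')=\mathcal{C}^c_k(G,T)$. Moreover, given any certificate for $(H,\ell)$, there is a certificate for $(H',\ell')$ such that for every $k$-coloring $\gamma$ of $G$, if $x$ is the $\gamma|_{V(G)\setminus\{v\}}$-node of $H$ and $\gamma(v)=c$, then $x_c$ is the $\gamma$-node of $H'$.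
   Context: A terminal graph $(G,T)$ is a graph $G$ with $T\subseteq V(G)$. $(G,T)$ is obtained from $(G-v,T\setminus\{v\})$ by introducing $v$ if $T\ne V(G)$, $v\in T$ and $N(v)\subseteq T$. A $k$-coloring of $G$ is a map $\alpha:V(G)\to\{1,\dots,k\}$ with $\alpha(u)\ne\alpha(w)$ for all edges $uw$. $\mathcal{C}_k(G)$ has the $k$-colorings as nodes, adjacent iff they differ on exactly one vertex. For $T\subseteq V(G)$, label each coloring $\gamma$ by $\gamma|_T$. A label component is a maximal set of colorings with the same label inducing a connected subgraph of $\mathcal{C}_k(G)$. The contracted solution graph $\mathcal{C}^c_k(G,T)=(H,\ell)$ has one node $x$ per label component $S_x$, distinct $x,y$ adjacent iff some $\gamma\in S_x,\gamma'\in S_y$ are adjacent in $\mathcal{C}_k(G)$, and $\ell(x)$ the common label on $S_x$; labeled graphs are identified up to label-preserving isomorphism. A certificate for $(H,\ell)$ is an assignment of nonempty sets $S_x$ of $k$-colorings of $G$ to the nodes such that: the $S_x$ partition the $k$-colorings; $\gamma|_T=\ell(x)$ for $\gamma\in S_x$; adjacent nodes have distinct labels; each $S_x$ induces a connected subgraph of $\mathcal{C}_k(G)$; distinct $x,y$ are adjacent iff some $\gamma\in S_x$ and $\gamma'\in S_y$ are adjacent in $\mathcal{C}_k(G)$. The $\gamma$-node with respect to a certificate $S$ is the node $x$ with $\gamma\in S_x$. *)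

From mathcomp Require Import all_boot.

(* A graph is a finite type [V] of vertices with an edge relation [e : rel V]
   (assumed symmetric and irreflexive where needed), restricted to a vertex
   set [W : {set V}] (so G has W = [set: V] and G - v has W = [set~ v]).
   A (partial) map [g : {ffun V -> option 'I_k}] is a k-coloring of (W,e)
   iff it is defined (Some) exactly on W and proper on edges inside W.
   Colors {1..k} are represented by 'I_k. *)

Definition cmap (V : finType) (k : nat) := {ffun V -> option 'I_k}.

Definition is_col (V : finType) (e : rel V) (k : nat) (W : {set V})
  (g : cmap V k) : bool :=
  [forall x, (g x != None) == (x \in W)] &&
  [forall x, forall y, [&& x \in W, y \in W & e x y] ==> (g x != g y)].

Definition col_adj (V : finType) (k : nat) (g g' : cmap V k) : bool :=
  #|[set x | g x != g' x]| == 1.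

Definition lab (V : finType) (k : nat) (T : {set V}) (g : cmap V k) : cmap V k :=
  [ffun x => if x \in T then g x else None].

Definition induces_connected (V : finType) (k : nat) (S : {set cmap V k}) : Prop :=
  S != set0 /\
  forall g g', g \in S -> g' \in S ->
    connect (fun a b => [&& a \in S, b \in S & col_adj V k a b]) g g'.

Definition same_label_conn (V : finType) (e : rel V) (k : nat) (W T : {set V})
  (S : {set cmap V k}) : Prop :=
  (forall g, g \in S -> is_col V e k W g) /\
  (forall g g', g \in S -> g' \in S -> lab V k T g = lab V k T g') /\
  induces_connected V k S.

Definition label_component (V : finType) (e : rel V) (k : nat) (W T : {set V})
  (S : {set cmap V k}) : Prop :=
  same_label_conn V e k W T S /\
  forall S' : {set cmap V k}, S \subset S' -> same_label_conn V e k W T S' -> S' = S.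

(* (N,h,l) is (label-preservingly isomorphic to) the contracted solution
   graph C^c_k((W,e),T). *)
Definition is_contracted (V : finType) (e : rel V) (k : nat) (W T : {set V})
  (N : finType) (h : rel N) (l : N -> cmap V k) : Prop :=
  exists phi : N -> {set cmap V k},
    [/\ injective phi,
        (forall S, label_component V e k W T S <-> exists x, phi x = S),
        (forall x y, h x y <->
           (x != y /\ exists g g', [/\ g \in phi x, g' \in phi y & col_adj V k g g']))
      & (forall x g, g \in phi x -> lab V k T g = l x)].

Definition certificate (V : finType) (e : rel V) (k : nat) (W T : {set V})
  (N : finType) (h : rel N) (l : N -> cmap V k) (S : N -> {set cmap V k}) : Prop :=
  (forall x, S x != set0) /\
  (forall x g, g \in S x -> is_col V e k W g) /\
  (forall g, is_col V e k W g -> exists x, g \in S x) /\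
  (forall x y g, g \in S x -> g \in S y -> x = y) /\
  (forall x g, g \in S x -> lab V k T g = l x) /\
  (forall x y, h x y -> l x != l y) /\
  (forall x, induces_connected V k (S x)) /\
  (forall x y, x != y ->
         (h x y <-> exists g g', [/\ g \in S x, g' \in S y & col_adj V k g g'])).

Definition introduces (V : finType) (e : rel V) (T : {set V}) (v : V) : Prop :=
  [/\ T != [set: V], v \in T & forall u, e v u -> u \in T].

Definition ext (V : finType) (k : nat) (v : V) (c : 'I_k) (L : cmap V k) : cmap V k :=
  [ffun u => if u == v then Some c else L u].

Definition del (V : finType) (k : nat) (v : V) (g : cmap V k) : cmap V k :=
  [ffun u => if u == v then None else g u].

Definition Hp_cond (V : finType) (e : rel V) (k : nat) (T : {set V}) (v : V)
  (N : finType) (l : N -> cmap V k) (p : N * 'I_k) : bool :=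
  is_col V e k T (ext V k v p.2 (l p.1)).

Definition Hp_node (V : finType) (e : rel V) (k : nat) (T : {set V}) (v : V)
  (N : finType) (l : N -> cmap V k) : finType :=
  {p : N * 'I_k | Hp_cond V e k T v N l p}.

Definition Hp_edge (V : finType) (e : rel V) (k : nat) (T : {set V}) (v : V)
  (N : finType) (h : rel N) (l : N -> cmap V k) : rel (Hp_node V e k T v N l) :=
  fun p q => (p != q) &&
    (((val p).1 == (val q).1) || (h (val p).1 (val q).1 && ((val p).2 == (val q).2))).

Definition Hp_lab (V : finType) (e : rel V) (k : nat) (T : {set V}) (v : V)
  (N : finType) (l : N -> cmap V k) (p : Hp_node V e k T v N l) : cmap V k :=
  ext V k v (val p).2 (l (val p).1).

Definition Hp_mk (V : finType) (e : rel V) (k : nat) (T : {set V}) (v : V)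
  (N : finType) (l : N -> cmap V k) (x : N) (c : 'I_k)
  (H : Hp_cond V e k T v N l (x, c)) : Hp_node V e k T v N l :=
  exist _ (x, c) H.

(* A k-coloring g of G is the pair of its restriction del g, a coloring of
   G - v, and its color g v; since every neighbour of v is a terminal, a pair
   (a, c) comes from a coloring of G exactly when the label of a extended by
   v |-> c colors G[T].  Two colorings of G with the same color at v are
   adjacent iff their restrictions are, and two with different colors at v
   are adjacent iff their restrictions coincide.  So lifting each class S_x to
   the colorings g with del g in S_x and g v = c yields classes S_{x_c} whose
   adjacencies are exactly the edges of H'; and as v is a terminal, a
   same-label step never changes the color at v, so label components of G - v
   lift to label components of G. *)

From mathcomp Require Import all_boot.

Set Implicit Arguments. Unset Strict Implicit. Unset Printing Implicit Defensive.

Lemma connect_homo (A B : finType) (r : rel A) (r' : rel B) (f : A -> B) :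
  (forall a b, r a b -> r' (f a) (f b)) ->
  forall a b, connect r a b -> connect r' (f a) (f b).
Proof.
move=> fr a _ /connectP[p pth ->]; elim: p a pth => [|z p IHp] a /=.
  by rewrite connect0.
by case/andP=> /fr/connect1 raz /IHp; apply: connect_trans.
Qed.

Lemma connect_within (A : finType) (r : rel A) (S : {set A}) :
  (forall a b, a \in S -> r a b -> b \in S) ->
  forall a b, a \in S -> connect r a b ->
  connect [rel x y | [&& x \in S, y \in S & r x y]] a b.
Proof.
move=> clS a _ aS /connectP[p pth ->]; elim: p a aS pth => [|z p IHp] a aS /=.
  by rewrite connect0.
case/andP=> raz pth; have zS := clS _ _ aS raz.
by apply: connect_trans (IHp _ zS pth); apply: connect1; rewrite /= aS zS raz.
Qed.

Section Colorings.
Variables (V : finType) (e : rel V) (k : nat).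

Lemma is_colP W (g : cmap V k) : is_col V e k W g <->
  (forall x, (g x != None) = (x \in W)) /\
  (forall x y, x \in W -> y \in W -> e x y -> g x != g y).
Proof.
split.
- case/andP=> /forallP dom /forallP prop; split=> [x|x y xW yW exy].
    exact: eqP (dom x).
  by move: (prop x) => /forallP/(_ y)/implyP; apply; rewrite xW yW exy.
- case=> dom prop; apply/andP; split; apply/forallP=> x.
    exact/eqP/dom.
  by apply/forallP=> y; apply/implyP=> /and3P[xW yW exy]; apply: prop.
Qed.

Lemma col_adj_sym : symmetric (col_adj V k).
Proof.
move=> a b; rewrite /col_adj.
suff -> : [set x | a x != b x] = [set x | b x != a x] by [].
by apply/setP=> u; rewrite !inE eq_sym.
Qed.

Variables (W T : {set V}).

Definition label_adj : rel (cmap V k) := fun a b =>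
  [&& is_col V e k W a, is_col V e k W b, lab V k T a == lab V k T b
    & col_adj V k a b].

Lemma label_adj_sym : symmetric label_adj.
Proof.
move=> a b; rewrite /label_adj col_adj_sym (eq_sym (lab V k T a)).
by case: (is_col V e k W a); case: (is_col V e k W b).
Qed.

Lemma label_adj_closed (S : {set cmap V k}) :
  (forall a b, a \in S -> label_adj a b -> b \in S) ->
  forall a b, connect label_adj a b -> (a \in S) = (b \in S).
Proof.
move=> clS; apply: closed_connect.
apply: (intro_closed (a := S) (sym_connect_sym label_adj_sym)) => a b.
by move/[swap]; apply: clS.
Qed.

Definition label_class (g : cmap V k) : {set cmap V k} :=
  [set g' | connect label_adj g g'].

Lemma label_class_refl g : g \in label_class g.
Proof. by rewrite inE connect0. Qed.

Lemma label_class_closed g a b :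
  a \in label_class g -> label_adj a b -> b \in label_class g.
Proof. by rewrite !inE => ga /connect1; apply: connect_trans. Qed.

Lemma label_class_col g g' : is_col V e k W g -> g' \in label_class g ->
  is_col V e k W g' /\ lab V k T g' = lab V k T g.
Proof.
move=> cg; rewrite inE => gg'.
pose A := [set b | is_col V e k W b && (lab V k T b == lab V k T g)].
have clA a b : a \in A -> label_adj a b -> b \in A.
  by rewrite /A !inE => /andP[_ /eqP <-] /and4P[_ -> /eqP -> _]; rewrite eqxx.
have : g' \in A by rewrite -(label_adj_closed clA gg') /A inE cg eqxx.
by rewrite /A inE => /andP[-> /eqP].
Qed.

Lemma same_label_conn_sub S g :
  same_label_conn V e k W T S -> g \in S -> S \subset label_class g.
Proof.
case=> colS [labS [_ connS]] gS; apply/subsetP=> g' g'S; rewrite inE.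
apply: connect_sub (connS _ _ gS g'S) => a b /and3P[aS bS ab].
by apply: connect1; rewrite /label_adj !colS // (labS a b) // eqxx.
Qed.

Lemma label_class_component g :
  is_col V e k W g -> label_component V e k W T (label_class g).
Proof.
move=> cg; have slc : same_label_conn V e k W T (label_class g).
  split; [|split; [|split]].
  - by move=> a /(label_class_col cg)[].
  - by move=> a b /(label_class_col cg)[_ ->] /(label_class_col cg)[_ ->].
  - by apply/set0Pn; exists g; apply: label_class_refl.
  move=> a b; rewrite !inE => ga gb.
  have ab : connect label_adj a b.
    by apply: connect_trans gb; rewrite (sym_connect_sym label_adj_sym).
  apply: connect_sub (connect_within (@label_class_closed g) _ ab).
  - by move=> x y /and3P[xS yS /and4P[_ _ _ xy]]; apply: connect1; rewrite /= xS yS.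
  - by rewrite inE.
split=> // S' sub slc'; apply/eqP; rewrite eqEsubset sub andbT.
exact: same_label_conn_sub slc' (subsetP sub _ (label_class_refl g)).
Qed.

Lemma label_componentE S g :
  label_component V e k W T S -> g \in S -> S = label_class g.
Proof.
case=> slc maxS gS; symmetry; apply: maxS; first exact: same_label_conn_sub.
by case: slc => colS _; apply: (label_class_component (colS g gS)).1.
Qed.

Lemma label_component_closed S a b :
  label_component V e k W T S -> a \in S -> label_adj a b -> b \in S.
Proof.
move=> lcS aS ab; rewrite (label_componentE lcS aS).
exact: label_class_closed (label_class_refl a) ab.
Qed.

Lemma closed_label_component S :
  same_label_conn V e k W T S ->
  (forall a b, a \in S -> label_adj a b -> b \in S) -> label_component V e k W T S.
Proof.
move=> slc clS; have [colS [_ [/set0Pn[g gS] _]]] := slc.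
suff -> : S = label_class g by apply: label_class_component; apply: colS.
apply/eqP; rewrite eqEsubset same_label_conn_sub //=.
by apply/subsetP=> g'; rewrite inE => /(label_adj_closed clS) <-.
Qed.

End Colorings.

Record represents (V : finType) (e : rel V) (k : nat) (W T : {set V})
    (N : finType) (h : rel N) (l : N -> cmap V k) (P : N -> {set cmap V k}) :
    Prop := Represents {
  represents_connected : forall x, induces_connected V k (P x);
  represents_col : forall x g, g \in P x -> is_col V e k W g;
  represents_lab : forall x g, g \in P x -> lab V k T g = l x;
  represents_cover : forall g, is_col V e k W g -> exists x, g \in P x;
  represents_disjoint : forall x y g, g \in P x -> g \in P y -> x = y;
  represents_edge : forall x y, h x y <->
    x != y /\ exists g g', [/\ g \in P x, g' \in P y & col_adj V k g g']
}.
Arguments represents : clear implicits.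

Section Representations.
Variables (V : finType) (e : rel V) (k : nat) (W T : {set V}).
Variables (N : finType) (h : rel N) (l : N -> cmap V k).

Lemma certificateP S : certificate V e k W T N h l S <->
  represents V e k W T N h l S /\ (forall x y, h x y -> l x != l y).
Proof.
split.
- case=> S0 [colS [coverS [disjS [labS [hlab [connS edgeS]]]]]].
  split=> //; split=> // x y; split.
  + move=> hxy; have xy : x != y.
      by apply: contraTneq (hlab _ _ hxy) => ->; rewrite eqxx.
    by split=> //; apply/edgeS.
  + by case=> xy /(edgeS _ _ xy).
- case=> -[connS colS labS coverS disjS edgeS] hlab.
  do !split=> //; first by move=> x; case: (connS x).
  + by move=> hxy; case/edgeS: hxy.
  + by move=> xy_adj; apply/edgeS.
Qed.

Lemma is_contractedP : is_contracted V e k W T N h l <->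
  exists P, represents V e k W T N h l P /\
            forall x, label_component V e k W T (P x).
Proof.
split.
- case=> phi [phi_inj phi_lc edge labl].
  have lcx x : label_component V e k W T (phi x) by apply/phi_lc; exists x.
  exists phi; split=> //; split=> //.
  + by move=> x; case: (lcx x) => -[_ []].
  + by move=> x g gx; case: (lcx x) => -[colS _] _; apply: colS.
  + move=> g cg; have [x xg] := (phi_lc _).1 (label_class_component T cg).
    by exists x; rewrite xg label_class_refl.
  + move=> x y g gx gy; apply: phi_inj.
    by rewrite (label_componentE (lcx x) gx) (label_componentE (lcx y) gy).
- case=> P [[connP colP labP coverP disjP edgeP] lcP]; exists P; split=> //.
  + move=> x y Pxy; have [/set0Pn[g gx] _] := connP x.
    by apply: (disjP _ _ g gx); rewrite -Pxy.
  + move=> S; split=> [lcS|[x <-] //].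
    have [[colS [_ [/set0Pn[g gS] _]]] _] := lcS; have [x gx] := coverP _ (colS _ gS).
    by exists x; rewrite (label_componentE lcS gS) (label_componentE (lcP x) gx).
Qed.

End Representations.
Arguments certificateP {V e k W T N h l S}.
Arguments is_contractedP {V e k W T N h l}.

Section IntroduceVertex.
Variables (V : finType) (e : rel V) (T : {set V}) (v : V) (k : nat).
Hypothesis e_sym : symmetric e.
Hypotheses (vT : v \in T) (NvT : forall u, e v u -> u \in T).

Local Notation colG := (is_col V e k [set: V]).
Local Notation colH := (is_col V e k [set~ v]).
Local Notation labG := (lab V k T).
Local Notation labH := (lab V k (T :\ v)).
Local Notation del := (del V k v).
Local Notation ext := (ext V k v).
Implicit Types (g a b : cmap V k) (c d : 'I_k).

Lemma colH_None g : colH g -> g v = None.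
Proof. by case/is_colP=> dom _; move: (dom v); rewrite !inE eqxx; case: (g v). Qed.

Lemma colG_neq_None g u : colG g -> g u != None.
Proof. by case/is_colP=> dom _; rewrite dom inE. Qed.

Lemma ext_v a c : ext c a v = Some c.
Proof. by rewrite ffunE eqxx. Qed.

Lemma ext_del g c : g v = Some c -> ext c (del g) = g.
Proof. by move=> gv; apply/ffunP=> u; rewrite !ffunE; case: eqP => // ->; rewrite gv. Qed.

Lemma del_ext a c : a v = None -> del (ext c a) = a.
Proof. by move=> av; apply/ffunP=> u; rewrite !ffunE; case: eqP => // ->; rewrite av. Qed.

Lemma labH_v a : labH a v = None.
Proof. by rewrite ffunE !inE eqxx. Qed.

Lemma lab_ext a c : a v = None -> labG (ext c a) = ext c (labH a).
Proof.
by move=> av; apply/ffunP=> u; rewrite !ffunE !inE; case: eqP => [->|]; rewrite ?vT.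
Qed.

Lemma lab_del g : labH (del g) = del (labG g).
Proof. by apply/ffunP=> u; rewrite !ffunE !inE; case: eqP. Qed.

Lemma del_colG g : colG g -> colH (del g).
Proof.
case/is_colP=> dom prop; apply/is_colP; split=> [x|x y].
  by rewrite ffunE !inE; case: (x =P v) => //= _; rewrite dom inE.
rewrite !inE !ffunE => /negbTE -> /negbTE ->; apply: prop; exact: in_setT.
Qed.

Lemma labG_col g : colG g -> is_col V e k T (labG g).
Proof.
case/is_colP=> dom prop; apply/is_colP; split=> [x|x y xT yT exy]; rewrite !ffunE.
  by case: ifP => xT; rewrite ?dom ?inE.
by rewrite xT yT; apply: prop; rewrite ?inE.
Qed.

Lemma ext_colG a c : colH a -> is_col V e k T (ext c (labH a)) -> colG (ext c a).
Proof.
case/is_colP=> dom prop /is_colP[_ propT]; apply/is_colP; split=> [x|x y _ _ exy].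
  by rewrite ffunE inE; case: (x =P v) => // /eqP xv; rewrite dom !inE xv.
have ext_labH u : u \in T -> ext c a u = ext c (labH a) u.
  by move=> uT; rewrite !ffunE !inE uT andbT; case: eqP.
have [xv|xv] := eqVneq x v.
  subst x; have yT := NvT exy; rewrite !ext_labH //; exact: propT.
have [yv|yv] := eqVneq y v.
  subst y; have xT : x \in T by apply: NvT; rewrite e_sym.
  rewrite !ext_labH //; exact: propT.
by rewrite !ffunE (negbTE xv) (negbTE yv); apply: prop; rewrite ?inE.
Qed.

Lemma colG_node g c : colG g -> g v = Some c -> is_col V e k T (ext c (labH (del g))).
Proof. by move=> cg gv; rewrite -lab_ext ?ext_del ?ffunE ?eqxx //; apply: labG_col. Qed.

Lemma col_adj_del g g' : g v = g' v -> col_adj V k (del g) (del g') = col_adj V k g g'.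
Proof.
move=> gv; rewrite /col_adj.
suff -> : [set x | del g x != del g' x] = [set x | g x != g' x] by [].
by apply/setP=> u; rewrite !inE !ffunE; case: (u =P v) => // ->; rewrite gv !eqxx.
Qed.

Lemma col_adj_ext a b c :
  a v = None -> b v = None -> col_adj V k (ext c a) (ext c b) = col_adj V k a b.
Proof. by move=> av bv; rewrite -col_adj_del ?ext_v // !del_ext. Qed.

Lemma col_adj_ext_neq a c d : c != d -> col_adj V k (ext c a) (ext d a).
Proof.
move=> cd; rewrite /col_adj.
suff -> : [set x | ext c a x != ext d a x] = [set v] by rewrite cards1.
by apply/setP=> u; rewrite !inE !ffunE; case: (u =P v) => //= _; rewrite eqxx.
Qed.

Lemma col_adj_del_eq g g' : col_adj V k g g' -> g v != g' v -> del g = del g'.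
Proof.
rewrite /col_adj => /cards1P[x Dx] gv.
have : v \in [set x | g x != g' x] by rewrite inE.
rewrite Dx inE => /eqP xv; subst x.
apply/ffunP=> u; rewrite !ffunE; case: (u =P v) => // /eqP uv.
apply/eqP; apply: contraNT uv => guv.
have : u \in [set x | g x != g' x] by rewrite inE.
by rewrite Dx inE.
Qed.

Lemma labG_v g : labG g v = g v.
Proof. by rewrite ffunE vT. Qed.

Variables (N : finType) (h : rel N) (l : N -> cmap V k).

Local Notation node := (Hp_node V e k T v N l).
Local Notation node_of := (Hp_mk V e k T v N l).

Definition lift_class (P : N -> {set cmap V k}) (p : node) : {set cmap V k} :=
  [set g | [&& colG g, del g \in P (val p).1 & g v == Some (val p).2]].

Section Lift.
Variable P : N -> {set cmap V k}.
Hypothesis HP : represents V e k [set~ v] (T :\ v) N h l P.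

Lemma base_None x a : a \in P x -> a v = None.
Proof. by move/(represents_col HP); apply: colH_None. Qed.

Lemma node_neq x c d (Hc : Hp_cond V e k T v N l (x, c))
    (Hd : Hp_cond V e k T v N l (x, d)) :
  node_of x c Hc != node_of x d Hd -> c != d.
Proof. by apply: contraNneq => cd; subst d; apply/eqP/val_inj. Qed.

Lemma ext_mem_lift a x c (Hxc : Hp_cond V e k T v N l (x, c)) :
  a \in P x -> ext c a \in lift_class P (node_of x c Hxc).
Proof.
move=> aP; have av := base_None aP.
rewrite inE /= del_ext // aP ext_v eqxx andbT ext_colG //.
  exact: (represents_col HP aP).
by rewrite (represents_lab HP aP).
Qed.

Lemma lift_col p g : g \in lift_class P p -> colG g.
Proof. by rewrite inE => /and3P[]. Qed.

Lemma lift_lab p g : g \in lift_class P p -> labG g = Hp_lab V e k T v N l p.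
Proof.
case: p => [[x c] Hxc]; rewrite inE /= => /and3P[_ gP /eqP gv].
by rewrite /Hp_lab /= -(represents_lab HP gP) -lab_ext ?ext_del // ffunE eqxx.
Qed.

Lemma lift_connected p : induces_connected V k (lift_class P p).
Proof.
case: p => [[x c] Hxc]; have [/set0Pn[a aP] connP] := represents_connected HP x.
split; first by apply/set0Pn; exists (ext c a); apply: ext_mem_lift.
move=> g1 g2; rewrite !inE /= => /and3P[_ g1P /eqP g1v] /and3P[_ g2P /eqP g2v].
rewrite -(ext_del g1v) -(ext_del g2v).
apply: connect_homo (connP _ _ g1P g2P) => a1 a2 /and3P[a1P a2P a12] /=.
by rewrite !ext_mem_lift // col_adj_ext ?(base_None a1P) ?(base_None a2P).
Qed.

Lemma lift_cover g : colG g -> exists p, g \in lift_class P p.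
Proof.
move=> cg; case gv: (g v) => [c|]; last by move: (colG_neq_None v cg); rewrite gv.
have [x gP] := represents_cover HP (del_colG cg).
have Hxc : Hp_cond V e k T v N l (x, c).
  by rewrite /Hp_cond /= -(represents_lab HP gP); apply: colG_node.
by exists (node_of x c Hxc); rewrite inE cg gP gv eqxx.
Qed.

Lemma lift_disjoint p q g : g \in lift_class P p -> g \in lift_class P q -> p = q.
Proof.
case: p q => [[x c] Hp] [[y d] Hq]; rewrite !inE /=.
move=> /and3P[_ gx /eqP ->] /and3P[_ gy /eqP[cd]]; apply: val_inj => /=.
by rewrite (represents_disjoint HP gx gy) cd.
Qed.

Lemma lift_edge p q : Hp_edge V e k T v N h l p q <->
  p != q /\ exists g g', [/\ g \in lift_class P p, g' \in lift_class P q
                           & col_adj V k g g'].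
Proof.
case: p q => [[x c] Hp] [[y d] Hq]; rewrite /Hp_edge /=; split.
- case/andP=> pq adj_pq; split=> //; case/orP: adj_pq => [/eqP xy|/andP[hxy /eqP cd]].
  + subst y; have cd := node_neq pq.
    have [/set0Pn[a aP] _] := represents_connected HP x.
    by exists (ext c a), (ext d a); rewrite !ext_mem_lift ?col_adj_ext_neq.
  + subst d; have [_ [a [b [aP bP ab]]]] := (represents_edge HP x y).1 hxy.
    exists (ext c a), (ext c b).
    by rewrite !ext_mem_lift // col_adj_ext ?(base_None aP) ?(base_None bP).
- case=> -> [g [g' []]]; rewrite !inE /= => /and3P[_ gx /eqP gv] /and3P[_ g'y /eqP g'v].
  have [->|xy adj] := eqVneq x y; first by rewrite ?eqxx.
  have [vv|vv] := eqVneq (g v) (g' v); last first.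
    move: gx; rewrite (col_adj_del_eq adj vv) => g'x.
    by rewrite (represents_disjoint HP g'x g'y) eqxx in xy.
  have cd : c = d by move: vv; rewrite gv g'v => -[].
  subst d; rewrite eqxx andbT /=; apply/(represents_edge HP x y).2.
  by split=> //; exists (del g), (del g'); rewrite col_adj_del.
Qed.

Lemma lift_represents :
  represents V e k [set: V] T node (Hp_edge V e k T v N h l) (Hp_lab V e k T v N l)
    (lift_class P).
Proof.
split; [exact: lift_connected | exact: lift_col | exact: lift_lab
       | exact: lift_cover | exact: lift_disjoint | exact: lift_edge].
Qed.

Lemma node_lab_v x : l x v = None.
Proof.
have [/set0Pn[a aP] _] := represents_connected HP x.
by rewrite -(represents_lab HP aP) labH_v.
Qed.

Lemma lift_lab_neq : (forall x y, h x y -> l x != l y) ->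
  forall p q, Hp_edge V e k T v N h l p q ->
  Hp_lab V e k T v N l p != Hp_lab V e k T v N l q.
Proof.
move=> hl [[x c] Hp] [[y d] Hq]; rewrite /Hp_edge /Hp_lab /=.
case/andP=> pq /orP[/eqP xy|/andP[hxy /eqP cd]].
- subst y; apply: contra (node_neq pq) => /eqP/(congr1 (fun f : cmap V k => f v)).
  by rewrite !ext_v => -[->].
- subst d; apply: contra (hl _ _ hxy) => /eqP lxy.
  by rewrite -(del_ext c (node_lab_v x)) -(del_ext c (node_lab_v y)) lxy.
Qed.

Lemma lift_label_component :
  (forall x, label_component V e k [set~ v] (T :\ v) (P x)) ->
  forall p, label_component V e k [set: V] T (lift_class P p).
Proof.
move=> lcP p; apply: closed_label_component.
  split; first exact: lift_col.
  by split; [move=> a b /lift_lab -> /lift_lab -> | exact: lift_connected].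
case: p => [[x c] Hxc] a b; rewrite !inE /=.
move=> /and3P[ca aP /eqP av] /and4P[_ cb /eqP lab_ab adj].
have bv : b v = Some c by rewrite -labG_v -lab_ab labG_v.
rewrite cb bv eqxx andbT; apply: label_component_closed (lcP x) aP _.
by rewrite /label_adj !del_colG // !lab_del lab_ab eqxx col_adj_del ?av ?bv.
Qed.

End Lift.
Lemma lift_is_contracted :
  is_contracted V e k [set~ v] (T :\ v) N h l ->
  is_contracted V e k [set: V] T node (Hp_edge V e k T v N h l) (Hp_lab V e k T v N l).
Proof.
case/is_contractedP=> P [HP lcP]; apply/is_contractedP; exists (lift_class P).
by split; [exact: lift_represents | exact: lift_label_component HP lcP].
Qed.

Lemma lift_certificate S :
  certificate V e k [set~ v] (T :\ v) N h l S ->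
  certificate V e k [set: V] T node (Hp_edge V e k T v N h l) (Hp_lab V e k T v N l)
    (lift_class S).
Proof.
case/certificateP=> HS hl; apply/certificateP.
by split; [exact: lift_represents | exact: lift_lab_neq HS hl].
Qed.

End IntroduceVertex.

Theorem lemma3 (V : finType) (e : rel V) (T : {set V}) (v : V) (k : nat)
  (e_sym : symmetric e) (e_irr : irreflexive e)
  (Hintro : introduces V e T v) (Hk : 0 < k)
  (N : finType) (h : rel N) (l : N -> cmap V k)
  (HC : is_contracted V e k [set~ v] (T :\ v) N h l) :
  is_contracted V e k [set: V] T (Hp_node V e k T v N l)
    (Hp_edge V e k T v N h l) (Hp_lab V e k T v N l)
  /\
  (forall S : N -> {set cmap V k},
     certificate V e k [set~ v] (T :\ v) N h l S ->
     exists S' : Hp_node V e k T v N l -> {set cmap V k},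
       certificate V e k [set: V] T (Hp_node V e k T v N l)
         (Hp_edge V e k T v N h l) (Hp_lab V e k T v N l) S' /\
       (forall (g : cmap V k) (x : N) (c : 'I_k)
               (Hxc : Hp_cond V e k T v N l (x, c)),
          is_col V e k [set: V] g ->
          del V k v g \in S x -> g v = Some c ->
          g \in S' (Hp_mk V e k T v N l x c Hxc))).
Proof.
case: Hintro => _ vT NvT; split; first exact: lift_is_contracted.
move=> S cert; exists (lift_class S); split; first exact: lift_certificate.
by move=> g x c Hxc cg gx gv; rewrite inE cg gx gv eqxx.
Qed.
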